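(* $G$ contains an edge $uv$ such that $u \notin Z$ and $v \notin Z$.
   Context: $(G,k,t,T_1,T_2)$ is an instance of the Cheap Coloring Extension problem ($G$ bipartite, $T_1,T_2$ disjoint vertex sets with $|T_1|+|T_2|\le t$). A set $X\subseteq V(G)$ is well-connected if for all $X_1,X_2\subseteq X$ with $|X_1|=|X_2|\le |X|/2$ there are $|X_1|$ vertex-disjoint paths in $G$ with one endpoint in $X_1$ and the other in $X_2$; $Y$ is a well-connected set in $G$ of size at least $2(4k^2)\, t\, 4^{4k^2}+2$. Let $G^*$ be obtained from $G$ by adding a new vertex $y^*$ adjacent to all vertices of $Y$. For vertices $x,y$, a set $X$ is $(x,y)$-important if $x\in X$, $y\notin X$, $G^*[X]$ is connected, and there is no $X'\supset X$ with $y\notin X'$, $G^*[X']$ connected and $d_{G^*}(X')\le d_{G^*}(X)$, where $d_{G^*}(X)$ is the number of edges of $G^*$ with exactly one endpoint in $X$. $Z$ is the union of all $(x,y^* )$-important sets $X$ in $G^*$ with $d_{G^*}(X)\le 4k^2$, over all $x\in T_1\cup T_2$. *)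

From mathcomp Require Import all_boot.
Set Implicit Arguments. Unset Strict Implicit. Unset Printing Implicit Defensive.

Section Graphs.
Variable V : finType.

Definition simple_graph (e : rel V) : Prop := irreflexive e /\ symmetric e.

Definition bipartite (e : rel V) : Prop :=
  exists f : V -> bool, forall u v, e u v -> f u != f v.

(* a path is given by its first vertex and the sequence of remaining vertices *)
Definition is_path (e : rel V) (p : V * seq V) : bool :=
  path e p.1 p.2 && uniq (p.1 :: p.2).

Definition pverts (p : V * seq V) : seq V := p.1 :: p.2.

Definition pend (p : V * seq V) : V := last p.1 p.2.

Definition well_connected (e : rel V) (X : {set V}) : Prop :=
  forall X1 X2 : {set V}, X1 \subset X -> X2 \subset X ->
    #|X1| = #|X2| -> #|X1| * 2 <= #|X| ->
    exists ps : 'I_#|X1| -> V * seq V,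
      (forall i, is_path e (ps i) /\
         (((ps i).1 \in X1 /\ pend (ps i) \in X2) \/
          ((ps i).1 \in X2 /\ pend (ps i) \in X1))) /\
      (forall i j, i != j -> [disjoint pverts (ps i) & pverts (ps j)]).

(* G* : G plus a new vertex y* (= None) adjacent to all vertices of Y *)
Definition gstar (e : rel V) (Y : {set V}) : rel (option V) :=
  fun a b => match a, b with
  | Some u, Some v => e u v
  | None, Some v => v \in Y
  | Some u, None => u \in Y
  | None, None => false
  end.

Definition induced_connected (E : rel (option V)) (X : {set option V}) : bool :=
  [forall a in X, forall b in X,
    connect [rel c d | [&& c \in X, d \in X & E c d]] a b].

Definition dcut (E : rel (option V)) (X : {set option V}) : nat :=
  #|[set p : option V * option V | [&& E p.1 p.2, p.1 \in X & p.2 \notin X]]|.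

Definition important (E : rel (option V)) (x y : option V) (X : {set option V}) : bool :=
  [&& x \in X, y \notin X, induced_connected E X &
   ~~ [exists X' : {set option V}, [&& X \proper X', y \notin X',
       induced_connected E X' & dcut E X' <= dcut E X]]].

Definition Zset (E : rel (option V)) (k : nat) (T1 T2 : {set V}) : {set option V} :=
  [set a | [exists x in T1 :|: T2, exists X : {set option V},
      [&& important E (Some x) None X, dcut E X <= 4 * k ^ 2 & a \in X]]].
End Graphs.

From mathcomp Require Import all_boot zify.
Set Implicit Arguments. Unset Strict Implicit. Unset Printing Implicit Defensive.

(* Every vertex of Z lies in an important set of some x in T1 :|: T2 with cut size
   at most p = 4k^2, and there are at most 4^p such sets for each x.  With lam the
   minimum x-y* cut, the potential 2p - lam drops at each branching on an edge uv
   leaving the furthest minimum cut R: an important set either contains R + v,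
   where every cut exceeds lam, or avoids v, and then it stays important with
   bound p - 1 once uv is deleted, which lowers lam by at most one.
   Hence at most p t 4^p edges of G* leave Z.  These include an edge to y* from
   each y in Y :&: Z, so Y :\: Z has more than twice as many vertices as there are
   edges of G leaving Z.  Well-connectedness then gives more disjoint paths in G
   between vertices of Y :\: Z than such edges; a path entering Z must leave it
   through its own edge, so some path avoids Z, and its first edge is uv. *)

Definition boundary (T : finType) (E : rel T) (X : {set T}) : {set T * T} :=
  [set q | [&& E q.1 q.2, q.1 \in X & q.2 \notin X]].

Lemma mem_boundary (T : finType) (E : rel T) (X : {set T}) a b :
  ((a, b) \in boundary E X) = [&& E a b, a \in X & b \notin X].
Proof. by rewrite inE. Qed.

Lemma card_bigcup_le (I T : finType) (P : {pred I}) (F : I -> {set T}) :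
  #|\bigcup_(i in P) F i| <= \sum_(i in P) #|F i|.
Proof.
apply: (big_rec2 (fun (A : {set T}) n => #|A| <= n)); first by rewrite cards0.
by move=> i A n _ le_A_n; rewrite (leq_trans (leq_card_setU _ _).1) ?leq_add2l.
Qed.

Lemma boundary_bigcup (I T : finType) (E : rel T) (P : {pred I}) (F : I -> {set T}) :
  boundary E (\bigcup_(i in P) F i) \subset \bigcup_(i in P) boundary E (F i).
Proof.
apply/subsetP => -[a b]; rewrite mem_boundary => /and3P [Eab /bigcupP [i Pi aF] bU].
apply/bigcupP; exists i; rewrite // mem_boundary Eab aF.
by apply: contra bU => bF; apply/bigcupP; exists i.
Qed.

Lemma disjoint_subsets_of_card (T : finType) (A : {set T}) m : m * 2 <= #|A| ->
  exists X1 X2 : {set T},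
    [/\ X1 :|: X2 \subset A, [disjoint X1 & X2], #|X1| = m & #|X2| = m].
Proof.
case/card_geqP => s [uniq_s size_s sA].
have uniq_td : uniq (take m s ++ drop m s) by rewrite cat_take_drop.
exists [set x in take m s], [set x in drop m s]; split.
- apply/subsetP => x; rewrite !inE => /orP [/mem_take | /mem_drop]; exact: sA.
- move: uniq_td; rewrite cat_uniq => /and3P [_ /hasPn take_drop_disj _].
  rewrite disjoints_subset; apply/subsetP => x; rewrite !inE.
  exact: contraL (take_drop_disj x).
- by rewrite cardsE (card_uniqP (take_uniq _ uniq_s)) size_takel // size_s leq_pmulr.
- rewrite cardsE (card_uniqP (drop_uniq _ uniq_s)) size_drop size_s; lia.
Qed.

Section Cuts.
Variable V : finType.
Local Notation W := (option V).
Implicit Types (E : rel W) (A B C R S T X : {set W}) (y s : W).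

Definition induced E B : rel W := [rel a b | [&& a \in B, b \in B & E a b]].
Arguments induced E B /.

Definition component E B s : {set W} := [set b in B | connect (induced E B) s b].

Definition important_max E y X : bool :=
  ~~ [exists X' : {set W}, [&& X \proper X', y \notin X',
       induced_connected E X' & dcut E X' <= dcut E X]].

Definition important_sets E y (S : {set W}) (p : nat) : {set {set W}} :=
  [set X : {set W} | [&& S \subset X, y \notin X, induced_connected E X,
              important_max E y X & dcut E X <= p]].

Definition remove_edge E u v : rel W :=
  [rel a b | E a b && ~~ (((a == u) && (b == v)) || ((a == v) && (b == u)))].
Arguments remove_edge E u v /.

Lemma dcutE E X : dcut E X = #|boundary E X|. Proof. by []. Qed.

Lemma induced_connectedP E X :
  reflect {in X &, forall a b, connect (induced E X) a b} (induced_connected E X).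
Proof.
apply: (iffP forallP) => [conn_X a b aX bX | conn_X a].
  by move/implyP: (conn_X a) => /(_ aX) /forallP /(_ b) /implyP /(_ bX).
by apply/implyP => aX; apply/forallP => b; apply/implyP; exact: conn_X.
Qed.

Lemma induced_sym E B : symmetric E -> symmetric (induced E B).
Proof. by move=> sE a b; rewrite /= sE andbCA. Qed.

Lemma dcut_submod E A B : dcut E (A :|: B) + dcut E (A :&: B) <= dcut E A + dcut E B.
Proof.
rewrite !dcutE -cardsUI -(cardsUI (boundary E A)).
apply: leq_add; apply: subset_leq_card; apply/subsetP => -[a b]; rewrite !inE /=;
  by case: (E a b); case: (a \in A); case: (a \in B); case: (b \in A); case: (b \in B).
Qed.

Lemma component_sub E B s : component E B s \subset B.
Proof. by apply/subsetP => b; rewrite inE => /andP []. Qed.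

Lemma component_subset E B B' s : B \subset B' -> component E B s \subset component E B' s.
Proof.
move=> sBB'; apply/subsetP => b; rewrite !inE => /andP [bB conn_sb].
rewrite (subsetP sBB' _ bB); apply: connect_sub conn_sb => c d /and3P [cB dB Ecd].
by apply: connect1; rewrite /= (subsetP sBB' _ cB) (subsetP sBB' _ dB).
Qed.

Lemma component_closed E B s a b :
  a \in component E B s -> b \in B -> E a b -> b \in component E B s.
Proof.
rewrite !inE => /andP [aB conn_sa] bB Eab; rewrite bB.
by apply: connect_trans conn_sa (connect1 _); rewrite /= aB bB.
Qed.

Lemma dcut_component E B s : dcut E (component E B s) <= dcut E B.
Proof.
rewrite !dcutE; apply: subset_leq_card; apply/subsetP => -[a b].
rewrite !mem_boundary => /and3P [Eab aC bC].
rewrite Eab (subsetP (component_sub E B s) _ aC).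
by apply: contra bC => bB; rewrite (component_closed aC bB Eab).
Qed.

Lemma connect_component E B s a b : a \in component E B s ->
  connect (induced E B) a b -> connect (induced E (component E B s)) a b.
Proof.
move=> aC /connectP [q pth ->] {b}; elim: q a aC pth => [|c q IHq] a aC //=.
case/andP => /and3P [_ cB Eac] pth; have cC := component_closed aC cB Eac.
by apply: connect_trans (IHq c cC pth); apply: connect1; rewrite /= aC cC.
Qed.

Lemma induced_connected_component E B s : symmetric E -> s \in B ->
  induced_connected E (component E B s).
Proof.
move=> sE sB; have sC : s \in component E B s by rewrite inE sB connect0.
apply/induced_connectedP => a b aC bC.
have [conn_sa conn_sb] : connect (induced E B) s a /\ connect (induced E B) s b.
  by move: aC bC; rewrite !inE => /andP [_ ->] /andP [_ ->].
rewrite (sym_connect_sym (induced_sym _ sE)) in conn_sa.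
by apply: connect_trans (connect_component aC conn_sa) (connect_component sC conn_sb).
Qed.

Lemma sub_component E X B s : induced_connected E X -> X \subset B -> s \in X ->
  X \subset component E B s.
Proof.
move=> /induced_connectedP conn_X sXB sX; apply/subsetP => b bX.
rewrite inE (subsetP sXB _ bX); apply: connect_sub (conn_X _ _ sX bX).
move=> c d /and3P [cX dX Ecd]; apply: connect1.
by rewrite /= (subsetP sXB _ cX) (subsetP sXB _ dX).
Qed.

Lemma sub_boundary0 E C X s : boundary E C = set0 -> s \in C ->
  induced_connected E X -> s \in X -> X \subset C.
Proof.
move=> bC0 sC /induced_connectedP conn_X sX; apply/subsetP => b bX.
have /connectP [q pth ->] := conn_X _ _ sX bX.
clear sX bX; elim: q s sC pth => [|c q IHq] a aC //= /andP [/and3P [_ _ Eac] pth].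
apply: IHq pth; apply: contraT => cNC.
have : (a, c) \in boundary E C by rewrite mem_boundary Eac aC.
by rewrite bC0 inE.
Qed.

Lemma remove_edge_sym E u v : symmetric E -> symmetric (remove_edge E u v).
Proof.
move=> sE a b; rewrite /= sE.
by case: (a == u); case: (a == v); case: (b == u); case: (b == v); rewrite ?andbF.
Qed.

Lemma remove_edge_sub E u v : subrel (remove_edge E u v) E.
Proof. by move=> a b /andP []. Qed.

Lemma dcut_remove_edge E u v X : dcut E X <= (dcut (remove_edge E u v) X).+1.
Proof.
rewrite !dcutE -addn1 -(cards1 (if u \in X then (u, v) else (v, u))).
apply: leq_trans (leq_card_setU _ _).1; apply: subset_leq_card.
apply/subsetP => -[a b]; rewrite !inE /= => /and3P [Eab aX bX]; rewrite Eab aX bX /=.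
case: (boolP ((a == u) && (b == v) || (a == v) && (b == u))) => [|//].
case/orP => /andP [/eqP au /eqP bv]; subst a b.
- by rewrite aX eqxx orbT.
- by rewrite (negbTE bX) eqxx orbT.
Qed.

Lemma dcut_remove_edge_lt E u v X : u \in X -> v \notin X -> E u v ->
  dcut (remove_edge E u v) X < dcut E X.
Proof.
move=> uX vX Euv; rewrite !dcutE; apply: proper_card; rewrite properE.
apply/andP; split.
  by apply/subsetP => -[a b]; rewrite !mem_boundary => /and3P [/andP [-> _] -> ->].
apply/subsetPn; exists (u, v); first by rewrite mem_boundary Euv uX vX.
by rewrite mem_boundary /= !eqxx andbF.
Qed.

Lemma induced_connected_subrel E E' X : subrel E' E ->
  induced_connected E' X -> induced_connected E X.
Proof.
move=> sE'E /induced_connectedP conn_X; apply/induced_connectedP => a b aX bX.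
apply: connect_sub (conn_X a b aX bX) => c d /and3P [cX dX E'cd].
by apply: connect1; rewrite /= cX dX sE'E.
Qed.

Lemma induced_connected_remove_edge E u v X : v \notin X ->
  induced_connected (remove_edge E u v) X = induced_connected E X.
Proof.
move=> vX; have same_induced : induced (remove_edge E u v) X =2 induced E X.
  move=> a b /=; have [aX|] := boolP (a \in X); have [bX|] := boolP (b \in X) => //=.
  have [av bv] : a != v /\ b != v by split; apply: contraNneq vX => <-.
  by rewrite (negbTE av) (negbTE bv) andbF /= andbT.
apply/induced_connectedP/induced_connectedP => conn_X a b aX bX.
  by rewrite -(eq_connect same_induced) conn_X.
by rewrite (eq_connect same_induced) conn_X.
Qed.

Lemma furthest_min_cut E y S : y \notin S ->
  exists R, [/\ S \subset R, y \notin R,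
    forall A, S \subset A -> y \notin A -> dcut E R <= dcut E A &
    forall A, S \subset A -> y \notin A -> dcut E A <= dcut E R -> A \subset R].
Proof.
move=> yS; pose sep A := (S \subset A) && (y \notin A).
have sepS : sep S by rewrite /sep subxx yS.
have [A0 sepA0 minA0] := arg_minnP (fun A => dcut E A) sepS.
pose min_cut A := sep A && (dcut E A == dcut E A0).
have min_cut_A0 : min_cut A0 by rewrite /min_cut sepA0 eqxx.
have [R /andP [/andP [SR yR] /eqP dR] maxR] :=
  @arg_maxnP _ A0 min_cut (fun A => #|A|) min_cut_A0.
exists R; split=> // [A SA yA | A SA yA dA]; first by rewrite dR minA0 // /sep SA yA.
have sepU : sep (A :|: R) by rewrite /sep (subset_trans SA (subsetUl A R)) inE negb_or yA.
have sepI : sep (A :&: R) by rewrite /sep subsetI SA SR inE negb_and yA.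
have min_cut_U : min_cut (A :|: R).
  rewrite /min_cut sepU eqn_leq minA0 // andbT -dR -(leq_add2r (dcut E (A :&: R))).
  apply: leq_trans (dcut_submod E A R) _.
  by rewrite addnC leq_add2l (leq_trans dA) // dR minA0.
have /eqP -> : R == A :|: R by rewrite eqEcard subsetUr; exact: maxR min_cut_U.
exact: subsetUl.
Qed.

Lemma important_sets_sub_component E y S p R s X : symmetric E -> s \in S ->
  S \subset R -> y \notin R ->
  (forall A, S \subset A -> y \notin A -> dcut E R <= dcut E A) ->
  X \in important_sets E y S p -> component E R s \subset X.
Proof.
move=> sE sS SR yR Rmin; rewrite inE => /and5P [SX yX conn_X maxX _].
set C := component E (X :|: R) s.
have XC : X \subset C := sub_component conn_X (subsetUl X R) (subsetP SX _ sS).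
have yC : y \notin C.
  by apply/negP => /(subsetP (component_sub _ _ _)); rewrite inE (negbTE yX) (negbTE yR).
have dC : dcut E C <= dcut E X.
  apply: leq_trans (dcut_component E (X :|: R) s) _.
  rewrite -(leq_add2r (dcut E (X :&: R))); apply: leq_trans (dcut_submod E X R) _.
  by rewrite leq_add2l Rmin ?subsetI ?SX ?SR // inE negb_and yX.
have CX : C \subset X.
  apply: contraNT maxX => nCX; apply/existsP; exists C.
  rewrite properE XC nCX yC dC /= andbT.
  by apply: induced_connected_component; rewrite // inE (subsetP SX _ sS).
by apply: subset_trans CX; apply: component_subset; apply: subsetUr.
Qed.

Lemma important_sets_split E y S T R p u v : E u v -> u \in R ->
  T \subset R :|: [set v] -> (forall X, X \in important_sets E y S p -> R \subset X) ->
  important_sets E y S p \subset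
    important_sets E y T p :|: important_sets (remove_edge E u v) y R p.-1.
Proof.
move=> Euv uR TRv R_sub; apply/subsetP => X XI; have RX := R_sub X XI.
move: XI; rewrite inE => /and5P [SX yX conn_X maxX dX]; apply/setUP.
have [vX | vNX] := boolP (v \in X).
  left; rewrite inE yX conn_X maxX dX !andbT.
  by apply: subset_trans TRv _; rewrite subUset RX sub1set.
have uX := subsetP RX _ uR; have lt_d := dcut_remove_edge_lt uX vNX Euv.
right; rewrite inE RX yX induced_connected_remove_edge // conn_X !andTb.
have d_lt_p := leq_trans lt_d dX.
apply/andP; split; last by rewrite -ltnS (ltn_predK d_lt_p).
apply: contra maxX => /existsP [X' /and4P [XX' yX' conn_X' dX']].
apply/existsP; exists X'.
rewrite XX' yX' (induced_connected_subrel (@remove_edge_sub E u v) conn_X') /=.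
by apply: leq_trans (dcut_remove_edge E u v X') (leq_trans _ lt_d); rewrite ltnS.
Qed.

Lemma important_sets_eq0 E y S p :
  (forall A, S \subset A -> y \notin A -> p < dcut E A) -> important_sets E y S p = set0.
Proof.
move=> cut_gt_p; apply/setP => X; rewrite inE in_set0.
by apply/negP => /and5P [SX yX _ _]; rewrite leqNgt cut_gt_p.
Qed.

Lemma furthest_connected_min_cut E y S s : symmetric E -> s \in S ->
  induced_connected E S -> y \notin S ->
  exists2 R : {set W}, [/\ S \subset R, y \notin R & induced_connected E R] &
    [/\ forall A, S \subset A -> y \notin A -> dcut E R <= dcut E A,
        forall A u v, S \subset A -> y \notin A -> dcut E A <= dcut E R ->
          (u, v) \in boundary E R -> v \notin A
      & forall p X, X \in important_sets E y S p -> R \subset X].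
Proof.
move=> sE sS conn_S yS; have [R [SR yR Rmin Rmax]] := furthest_min_cut E yS.
have SRs : S \subset component E R s := sub_component conn_S SR sS.
have yRs : y \notin component E R s := contra (subsetP (component_sub E R s) y) yR.
have dRs : dcut E (component E R s) = dcut E R.
  by apply/eqP; rewrite eqn_leq dcut_component Rmin.
exists (component E R s); split=> //.
- exact: induced_connected_component sE (subsetP SR _ sS).
- by move=> A SA yA; rewrite dRs Rmin.
- move=> A u v SA yA; rewrite dRs mem_boundary => dA /and3P [Euv uRs]; apply: contra => vA.
  exact: component_closed uRs (subsetP (Rmax A SA yA dA) _ vA) Euv.
- move=> p X; exact: important_sets_sub_component sE sS SR yR Rmin.
Qed.

Lemma card_important_sets n E y S p : symmetric E -> S != set0 -> induced_connected E S ->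
  (forall A, S \subset A -> y \notin A -> 2 * p <= n + dcut E A) ->
  #|important_sets E y S p| <= 2 ^ n.
Proof.
elim/ltn_ind: n E S p => n IHn E S p sE /set0Pn [s sS] conn_S pot.
have [yS | yNS] := boolP (y \in S).
  by rewrite important_sets_eq0 ?cards0 // => A /subsetP/(_ y yS) ->.
have [R [SR yR conn_R] [Rmin R_far R_sub]] :=
  furthest_connected_min_cut sE sS conn_S yNS.
have sR := subsetP SR _ sS; have pot_R := pot R SR yR.
have [p_lt_dR | dR_le_p] := ltnP p (dcut E R).
  rewrite important_sets_eq0 ?cards0 // => A SA yA.
  exact: leq_trans p_lt_dR (Rmin A SA yA).
have [dR0 | dR_gt0] := posnP (dcut E R).
  apply: leq_trans (_ : #|[set R]| <= _); last by rewrite cards1 expn_gt0.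
  apply/subset_leq_card/subsetP => X XI; rewrite inE eqEsubset (R_sub p) // andbT.
  move: XI; rewrite inE => /and5P [SX _ conn_X _ _].
  apply: sub_boundary0 sR conn_X (subsetP SX _ sS).
  by apply/eqP; rewrite -cards_eq0 -dcutE dR0.
have /card_gt0P [[u v] uv_out] : 0 < #|boundary E R| by rewrite -dcutE.
have [Euv uR vR] : [/\ E u v, u \in R & v \notin R] by apply/and3P; rewrite -mem_boundary.
case: n IHn pot pot_R => [|n] IHn pot pot_R.
  by exfalso; clear -pot_R dR_le_p dR_gt0; lia.
set S' := component E (R :|: [set v]) s.
have RS' : R \subset S' := sub_component conn_R (subsetUl R [set v]) sR.
apply: leq_trans (subset_leq_card (important_sets_split (T := S') Euv uR
  (component_sub _ _ _) (R_sub p))) _.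
rewrite (leq_trans (leq_card_setU _ _).1) // expnS mul2n -addnn.
apply: leq_add; apply: (IHn n (ltnSn n)).
- exact: sE.
- by apply/set0Pn; exists s; apply: (subsetP RS').
- by apply: induced_connected_component sE _; rewrite in_setU sR.
- move=> A S'A yA; have SA := subset_trans SR (subset_trans RS' S'A).
  have [dR_lt_dA | dA_le_dR] := ltnP (dcut E R) (dcut E A).
    by apply: leq_trans pot_R _; rewrite addSnnS leq_add2l.
  have vS' : v \in S'.
    by apply: component_closed (subsetP RS' _ uR) _ Euv; rewrite !inE eqxx orbT.
  by have := R_far A u v SA yA dA_le_dR uv_out; rewrite (subsetP S'A _ vS').
- exact: remove_edge_sym.
- by apply/set0Pn; exists s.
- by rewrite induced_connected_remove_edge.
- move=> A RA yA; have dR_le_dA := Rmin A (subset_trans SR RA) yA.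
  have dA_le := dcut_remove_edge E u v A.
  by clear -pot_R dR_le_dA dA_le; lia.
Qed.
End Cuts.

Section WellConnected.
Variable V : finType.
Implicit Types (e : rel V) (Y Z : {set V}).

Fixpoint exit_edge Z (a : V) (q : seq V) : V * V :=
  if q is b :: q' then (if has [in Z] q then exit_edge Z b q' else (a, b)) else (a, a).

Lemma exit_edgeP e Z a q : path e a q -> has [in Z] (a :: q) -> last a q \notin Z ->
  exit_edge Z a q \in boundary e Z /\ (exit_edge Z a q).1 \in a :: q.
Proof.
elim: q a => [|b q IHq] a /=; first by rewrite orbF => _ ->.
case/andP => eab pth aZ_or_has lastNZ; case: ifP => [has_bq | hasN_bq].
  have [exit_bd exit_in] := IHq b pth has_bq lastNZ.
  by split; rewrite // in_cons exit_in orbT.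
rewrite hasN_bq orbF in aZ_or_has.
move/negbT: hasN_bq; rewrite negb_or => /andP [bNZ _].
by rewrite mem_boundary eab aZ_or_has bNZ inE eqxx.
Qed.

Lemma path_exit_edge e Z a q : path e a q -> a \notin Z -> last a q \notin Z ->
  a != last a q -> (forall u v, e u v -> u \notin Z -> v \in Z) ->
  exit_edge Z a q \in boundary e Z /\ (exit_edge Z a q).1 \in a :: q.
Proof.
move=> pth aNZ lastNZ a_ne_last no_out; apply: exit_edgeP => //.
case: q pth a_ne_last {lastNZ} => [|b q] /=; first by rewrite eqxx.
by case/andP => eab _ _; rewrite (no_out a b eab aNZ) orbT.
Qed.

Lemma well_connected_edge_outside e Y Z : well_connected e Y ->
  #|boundary e Z|.+1 * 2 <= #|Y :\: Z| -> exists u v, [/\ e u v, u \notin Z & v \notin Z].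
Proof.
move=> wc card_YZ.
pose outside_edge := [pred q : V * V | [&& e q.1 q.2, q.1 \notin Z & q.2 \notin Z]].
case: (pickP outside_edge) => [[u v] | edge_in]; first by case/and3P; exists u, v.
have no_out u v : e u v -> u \notin Z -> v \in Z.
  by move=> euv uNZ; apply: contraFT (edge_in (u, v)) => vNZ; rewrite /= euv uNZ vNZ.
exfalso.
have [X1 [X2 [X12_YZ disX12 cardX1 cardX2]]] := disjoint_subsets_of_card card_YZ.
have [X1Y X2Y] : X1 \subset Y /\ X2 \subset Y.
  by apply/andP; rewrite -subUset (subset_trans X12_YZ) ?subsetDl.
have card_X1Y : #|X1| * 2 <= #|Y|.
  by rewrite cardX1 (leq_trans card_YZ) ?subset_leq_card ?subsetDl.
have [ps [ps_path ps_disj]] := wc X1 X2 X1Y X2Y (etrans cardX1 (esym cardX2)) card_X1Y.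
have outZ x : x \in X1 :|: X2 -> x \notin Z.
  by move/(subsetP X12_YZ); rewrite inE => /andP [].
pose g i := exit_edge Z (ps i).1 (ps i).2.
have g_exit i : g i \in boundary e Z /\ (g i).1 \in pverts (ps i).
  rewrite /g /pverts; case: (ps_path i); case: (ps i) => a q /= /andP [pth _].
  rewrite /pend /= => ends; apply: path_exit_edge pth _ _ _ no_out;
    case: ends => -[aX lastX]; rewrite ?outZ ?inE ?aX ?lastX ?orbT //;
    apply: contraTneq lastX => <-.
  - by rewrite (disjointFr disX12 aX).
  - by rewrite (disjointFl disX12 aX).
have g_inj : injective g.
  move=> i j gij; apply/eqP; apply: contraT => i_ne_j.
  have [_ gi_in] := g_exit i; have [_ gj_in] := g_exit j.
  by rewrite gij in gi_in; rewrite (disjointFr (ps_disj i j i_ne_j) gi_in) in gj_in.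
have : #|g @: [set: 'I_(#|X1|)]| <= #|boundary e Z|.
  by apply/subset_leq_card/subsetP => _ /imsetP [i _ ->]; case: (g_exit i).
by rewrite (card_imset _ g_inj) cardsT card_ord cardX1 ltnn.
Qed.
End WellConnected.

Section Zset.
Variable V : finType.
Implicit Types (e : rel V) (E : rel (option V)) (Y T : {set V}) (X Z : {set option V}).

Lemma gstar_sym e Y : symmetric e -> symmetric (gstar e Y).
Proof. by move=> sym_e [a|] [b|] //=; exact: sym_e. Qed.

Lemma mem_important_sets E x y X p :
  (X \in important_sets E y [set x] p) = important E x y X && (dcut E X <= p).
Proof. by rewrite inE sub1set -!andbA. Qed.

Lemma ZsetE E k T1 T2 : Zset E k T1 T2 =
  \bigcup_(x in T1 :|: T2) \bigcup_(X in important_sets E None [set Some x] (4 * k ^ 2)) X.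
Proof.
apply/setP => a; rewrite inE; apply/existsP/bigcupP.
  case=> x /andP [xT /existsP [X /and3P [impX dX aX]]]; exists x => //.
  by apply/bigcupP; exists X; rewrite // mem_important_sets impX.
case=> x xT /bigcupP [X]; rewrite mem_important_sets => /andP [impX dX] aX.
by exists x; rewrite xT; apply/existsP; exists X; rewrite impX dX.
Qed.

Lemma card_important_sets_set1 E y x p : symmetric E ->
  #|important_sets E y [set x] p| <= 4 ^ p.
Proof.
move=> sE; rewrite (_ : 4 = 2 ^ 2) // -expnM; apply: card_important_sets.
- exact: sE.
- by apply/set0Pn; exists x; rewrite set11.
- by apply/induced_connectedP => a b /set1P -> /set1P ->.
- by move=> A _ _; apply: leq_addr.
Qed.

Lemma card_boundary_Zset E k T1 T2 : symmetric E ->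
  #|boundary E (Zset E k T1 T2)| <= #|T1 :|: T2| * (4 ^ (4 * k ^ 2) * (4 * k ^ 2)).
Proof.
move=> sE; rewrite ZsetE -sum_nat_const.
apply: leq_trans (subset_leq_card (boundary_bigcup _ _ _)) _.
apply: leq_trans (card_bigcup_le _ _) _; apply: leq_sum => x _.
apply: leq_trans (subset_leq_card (boundary_bigcup _ _ _)) _.
apply: leq_trans (card_bigcup_le _ _) _.
apply: (@leq_trans (\sum_(X in important_sets E None [set Some x] (4 * k ^ 2)) 4 * k ^ 2)).
  by apply: leq_sum => X; rewrite inE => /and5P [_ _ _ _ dX].
by rewrite sum_nat_const leq_mul2r card_important_sets_set1 ?orbT.
Qed.

Lemma card_boundary_gstar e Y Z : None \notin Z ->
  #|Y :&: [set u | Some u \in Z]| + #|boundary e [set u | Some u \in Z]|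
    <= #|boundary (gstar e Y) Z|.
Proof.
move=> NZ; pose f1 (u : V) := (Some u, @None V).
pose f2 (q : V * V) := (Some q.1, Some q.2).
have inj1 : injective f1 by move=> a b [].
have inj2 : injective f2 by move=> [a b] [c d] [-> ->].
set A := Y :&: _; set B := boundary e _.
have disj : [disjoint f1 @: A & f2 @: B].
  by apply/pred0P => q /=; apply/negbTE/andP => -[/imsetP [u _ ->] /imsetP [? _ []]].
rewrite -(card_imset _ inj1) -(card_imset _ inj2).
case: (leq_card_setU (f1 @: A) (f2 @: B)) => _; rewrite disj => /eqP <-.
apply/subset_leq_card/subsetP => q /setUP [] /imsetP [].
  by move=> u; rewrite !inE => /andP [uY uZ] ->; rewrite /= uY uZ NZ.
by move=> [a b]; rewrite !inE => /and3P [eab aZ bZ] ->; rewrite /= eab aZ bZ.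
Qed.
End Zset.

Theorem lemma7 (V : finType) e (k t : nat) (T1 T2 Y : {set V}) :
  simple_graph e -> bipartite e ->
  [disjoint T1 & T2] -> #|T1| + #|T2| <= t ->
  well_connected e Y ->
  2 * (4 * k ^ 2) * t * 4 ^ (4 * k ^ 2) + 2 <= #|Y| ->
  exists u v : V, [/\ e u v,
    Some u \notin Zset (gstar e Y) k T1 T2 &
    Some v \notin Zset (gstar e Y) k T1 T2].
Proof.
move=> [_ sym_e] _ _ card_T wc card_Y.
set E := gstar e Y; set Z := Zset E k T1 T2.
have NZ : None \notin Z.
  apply/negP; rewrite /Z ZsetE => /bigcupP [x _ /bigcupP [X]].
  by rewrite inE => /and5P [_ /negP NX _ _ _].
set Zv := [set u | Some u \in Z].
have card_Zv := card_boundary_gstar e Y NZ.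
have card_Z := card_boundary_Zset k T1 T2 (gstar_sym Y sym_e).
have card_T12 : #|T1 :|: T2| <= t := leq_trans (leq_card_setU _ _).1 card_T.
have card_YZv := cardsID Zv Y.
have [u [v [euv uZ vZ]]] : exists u v, [/\ e u v, u \notin Zv & v \notin Zv].
  apply: well_connected_edge_outside wc _.
  have := leq_mul card_T12 (leqnn (4 ^ (4 * k ^ 2) * (4 * k ^ 2))).
  rewrite -/E -/Z -/Zv in card_Z card_Zv; clear -card_Y card_Zv card_Z card_YZv; lia.
by rewrite [u \in Zv]inE [v \in Zv]inE in uZ vZ; exists u, v.
Qed.
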